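(* Let $G$ be a graph and $x$ an arbitrary vertex of $G$. Then there exists an L-sequence of $G$ of length $\gamma_{gr}^{L}(G)$ that contains $x$.
   Context: For a graph $G$, $N(v)$ is the open neighborhood and $N[v]=N(v)\cup\{v\}$ the closed neighborhood of $v$. A sequence $(v_1,\ldots,v_k)$ of distinct vertices is an L-sequence if $N[v_i]\setminus\bigcup_{j=1}^{i-1}N(v_j)\neq\emptyset$ for each $i\in[k]$. The L-Grundy domination number $\gamma_{gr}^{L}(G)$ is the maximum length of an L-sequence in $G$. *)

From mathcomp Require Import all_boot.

Set Implicit Arguments. Unset Strict Implicit. Unset Printing Implicit Defensive.

Definition simple_graph (T : finType) (e : rel T) : Prop :=
  symmetric e /\ irreflexive e.

Definition Nopen (T : finType) (e : rel T) (v : T) : {set T} := [set u | e v u].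
Definition Nclosed (T : finType) (e : rel T) (v : T) : {set T} := v |: Nopen e v.

Definition is_Lseq (T : finType) (e : rel T) (s : seq T) : bool :=
  uniq s &&
  all (fun i => [exists v : T, (v \in Nclosed e (nth v s i)) &&
                   (v \notin \bigcup_(u <- take i s) Nopen e u)])
      (iota 0 (size s)).

(* L-Grundy domination number: maximum length of an L-sequence
   (every L-sequence has length <= #|T| since its vertices are distinct). *)
Definition gammaL (T : finType) (e : rel T) : nat :=
  \max_(k < #|T|.+1 | [exists t : k.-tuple T, is_Lseq e t]) k.

From mathcomp Require Import all_boot.
Set Implicit Arguments. Unset Strict Implicit. Unset Printing Implicit Defensive.

(* Take a longest L-sequence s; if x is not in s, maximality forces
   N[x] to be covered by the open neighbourhoods of s.  Let v be the first
   vertex of s at which the open neighbourhoods of the prefix ending in v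
   cover N[x], and replace v by x.  Then x has a footprint, since N[x] is not
   covered before v, and every later vertex keeps its footprint, since
   N(x) is already covered by the prefix ending in v. *)

Lemma prefix_crossing (A : Type) (P : pred (seq A)) (s : seq A) :
  ~~ P [::] -> P s ->
  exists a v b, [/\ s = a ++ v :: b, ~~ P a & P (rcons a v)].
Proof.
elim: s P => [|v s IHs] P notP0 Ps; first by rewrite Ps in notP0.
have [Pv | notPv] := boolP (P [:: v]); first by exists [::], v, s.
have [a [w [b [-> notPva Pvaw]]]] := IHs (fun t => P (v :: t)) notPv Ps.
by exists (v :: a), w, b.
Qed.

Section LSequences.
Variables (T : finType) (e : rel T).

Definition Nseq (s : seq T) : {set T} := \bigcup_(u <- s) Nopen e u.

Lemma Nseq_nil : Nseq [::] = set0.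
Proof. exact: big_nil. Qed.

Lemma Nseq_cons v s : Nseq (v :: s) = Nopen e v :|: Nseq s.
Proof. exact: big_cons. Qed.

Lemma Nseq_cat a b : Nseq (a ++ b) = Nseq a :|: Nseq b.
Proof. exact: big_cat. Qed.

Lemma Nseq_rcons s v : Nseq (rcons s v) = Nseq s :|: Nopen e v.
Proof. by rewrite -cats1 Nseq_cat Nseq_cons Nseq_nil setU0. Qed.

(* [U] is the set of vertices already dominated by the open neighbourhoods of
   the vertices chosen before [s]. *)
Fixpoint is_Lseq_from (U : {set T}) (s : seq T) : bool :=
  if s is v :: s' then
    ~~ (Nclosed e v \subset U) && is_Lseq_from (U :|: Nopen e v) s'
  else true.

Lemma is_Lseq_fromE U s :
  all (fun i => [exists w, (w \in Nclosed e (nth w s i)) &&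
                           (w \notin U :|: Nseq (take i s))])
      (iota 0 (size s)) = is_Lseq_from U s.
Proof.
elim: s U => [|v s IHs] U //=.
rewrite -(IHs (U :|: Nopen e v)) -add1n iotaDl all_map Nseq_nil setU0.
congr (_ && _).
  by apply/existsP/subsetPn => [[w /andP[]] | [w Nw Uw]]; last exists w;
     [exists w | rewrite Nw].
by apply: eq_all => i /=; rewrite Nseq_cons setUA.
Qed.

Lemma is_LseqE s : is_Lseq e s = uniq s && is_Lseq_from set0 s.
Proof.
rewrite /is_Lseq -is_Lseq_fromE; congr (_ && _).
by apply: eq_all => i; rewrite set0U.
Qed.

Lemma is_Lseq_from_cat U a b :
  is_Lseq_from U (a ++ b) = is_Lseq_from U a && is_Lseq_from (U :|: Nseq a) b.
Proof.
elim: a U => [|v a IHa] U /=; first by rewrite Nseq_nil setU0.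
by rewrite IHa Nseq_cons setUA andbA.
Qed.

Lemma is_Lseq_fromS (U U' : {set T}) s :
  U \subset U' -> is_Lseq_from U' s -> is_Lseq_from U s.
Proof.
elim: s U U' => [|v s IHs] U U' //= sUU' /andP[footv Ls].
rewrite (contra (fun sNU => subset_trans sNU sUU') footv) /=.
exact: IHs (setSU _ sUU') Ls.
Qed.

(* The dominated set after [x] is contained in the one after [v], because
   N(x) is covered by the prefix ending in [v]. *)
Lemma is_Lseq_from_swap U a v b x :
  is_Lseq_from U (a ++ v :: b) ->
  ~~ (Nclosed e x \subset U :|: Nseq a) ->
  Nclosed e x \subset U :|: Nseq (rcons a v) ->
  is_Lseq_from U (a ++ x :: b).
Proof.
rewrite !is_Lseq_from_cat /= => /and3P[La _ Lb] footx coverx.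
rewrite La footx /=; apply: is_Lseq_fromS Lb.
rewrite subUset subsetUl /=.
by apply: subset_trans (subsetUr [set x] _) _; rewrite -setUA -Nseq_rcons.
Qed.

Lemma is_Lseq_swap a v b x :
  is_Lseq e (a ++ v :: b) -> x \notin a ++ v :: b ->
  ~~ (Nclosed e x \subset Nseq a) -> Nclosed e x \subset Nseq (rcons a v) ->
  is_Lseq e (a ++ x :: b).
Proof.
rewrite !is_LseqE => /andP[uniq_s Ls] xNs footx coverx.
have uniq_ab : uniq (a ++ b).
  by move: uniq_s; rewrite -cat1s uniq_catCA => /andP[].
have xNab : x \notin a ++ b.
  by move: xNs; rewrite !mem_cat in_cons !negb_or => /and3P[-> _ ->].
rewrite -cat1s uniq_catCA /= xNab uniq_ab.
by apply: is_Lseq_from_swap Ls _ _; rewrite set0U.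
Qed.

Lemma size_Lseq_le_gammaL s : is_Lseq e s -> size s <= gammaL e.
Proof.
rewrite is_LseqE => /andP[uniq_s Ls].
have lt_s : size s < #|T|.+1 by rewrite ltnS -(card_uniqP uniq_s) max_card.
apply: (@leq_bigmax_cond _ _ (fun k : 'I_#|T|.+1 => val k) (Ordinal lt_s)).
by apply/existsP; exists (in_tuple s); rewrite is_LseqE uniq_s.
Qed.

Lemma gammaL_attained : exists2 s, is_Lseq e s & size s = gammaL e.
Proof.
have Lnil : [exists t : (@ord0 #|T|).-tuple T, is_Lseq e t].
  by apply/existsP; exists [tuple].
rewrite /gammaL (bigmax_eq_arg ord0 Lnil).
case: arg_maxnP => // k /existsP[t Lt] _.
by exists t; rewrite ?size_tuple.
Qed.

Lemma Nclosed_sub_Nseq_max s x :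
  is_Lseq e s -> size s = gammaL e -> x \notin s ->
  Nclosed e x \subset Nseq s.
Proof.
move=> Ls max_s xNs; apply: contraT => footx.
have : is_Lseq e (rcons s x).
  move: Ls; rewrite !is_LseqE rcons_uniq xNs -cats1 is_Lseq_from_cat.
  by case/andP=> -> -> /=; rewrite set0U footx.
by move/size_Lseq_le_gammaL; rewrite size_rcons max_s ltnn.
Qed.

End LSequences.

Theorem proposition6p1 (T : finType) (e : rel T) (x : T) :
  simple_graph e ->
  exists s : seq T, [/\ is_Lseq e s, size s = gammaL e & x \in s].
Proof.
move=> _.
have [s Ls max_s] := gammaL_attained e.
have [xs | xNs] := boolP (x \in s); first by exists s.
have notcov0 : ~~ (Nclosed e x \subset Nseq e [::]).
  by apply/subsetPn; exists x; [exact: setU11 | rewrite Nseq_nil inE].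
have [a [v [b [def_s footx coverx]]]] :=
  prefix_crossing (P := fun t => Nclosed e x \subset Nseq e t) notcov0
    (Nclosed_sub_Nseq_max Ls max_s xNs).
rewrite def_s in Ls xNs.
exists (a ++ x :: b); split.
- exact: is_Lseq_swap Ls xNs footx coverx.
- by rewrite -max_s def_s !size_cat.
- by rewrite mem_cat mem_head orbT.
Qed.
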